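(* Let $\mathsf K$ be a class of $\tau$-algebras. Then $$\mathsf K\subseteq\bigcup_{\mu\in\mathsf{Ord}}\mathsf K^{\diamond^\mu}\subseteq\bigcup_{\mathbf A\in\mathsf K}\mathbb V(\mathbf A)\subseteq\mathbb V(\mathsf K).$$
   Context: $\tau$ is a set of $\omega$-ary operation symbols disjoint from $\{q\}\cup\{e_i:i\in\omega\}$; a $\tau$-algebra has operations $A^\omega\to A$. $\mathbb V(\mathsf K)$ is the smallest variety (class closed under isomorphic copies, homomorphic images, subalgebras, arbitrary products) containing $\mathsf K$. An infinitary clone $\tau$-algebra is an algebra with constants $e_i$ ($i\in\omega$), a constant $f$ for each $f\in\tau$, and an $\omega$-ary $q$ satisfying (N1) $q(e_i,x_0,x_1,\dots)=x_i$; (N2) $q(x,e_0,e_1,\dots)=x$; (N3) $q(q(x,y_0,y_1,\dots),\boldsymbol z)=q(x,q(y_0,\boldsymbol z),q(y_1,\boldsymbol z),\dots)$. $\mathcal O^{(\omega)}_{\mathbf A}$ is the infinitary clone $\tau$-algebra of all functions $A^\omega\to A$ with $e_i(s)=s_i$, $q(g_0,g_1,\dots)(s)=g_0(g_1(s),g_2(s),\dots)$, $f\mapsto f^{\mathbf A}$; $\mathsf{FCA}(\mathbf A)$ is the class of its subalgebras. For a class $\mathsf K$ of $\tau$-algebras, $\mathsf K^{\triangle}$ is the class of infinitary clone $\tau$-algebras isomorphic to a subalgebra of $\mathcal O^{(\omega)}_{\mathbf A}$ for some $\mathbf A\in\mathsf K$; for a class $\mathsf H$ of infinitary clone $\tau$-algebras,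 $\mathsf H^{\nabla}$ is the class of $\tau$-algebras isomorphic to some $\mathbf A$ with $\mathsf{FCA}(\mathbf A)\cap\mathsf H\ne\emptyset$. Put $\mathsf K^\diamond=(\mathsf K^\triangle)^\nabla$ and define by transfinite recursion $\mathsf K^{\diamond^0}=\mathsf K$, $\mathsf K^{\diamond^{\nu+1}}=(\mathsf K^{\diamond^\nu})^\diamond$, and $\mathsf K^{\diamond^\mu}=\bigcup_{\nu<\mu}\mathsf K^{\diamond^\nu}$ for limit $\mu$. *)

From Stdlib Require Import Wellfounded.
Set Implicit Arguments.
Unset Strict Implicit.



Section Defs.
Variable tau : Type.

Record alg := Alg { car : Type; op : tau -> (nat -> car) -> car }.

Definition class := alg -> Prop.
Arguments op : clear implicits.

Definition is_hom (A B : alg) (h : car A -> car B) : Prop :=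
  forall f (s : nat -> car A), h (op A f s) = op B f (fun i => h (s i)).

Definition iso (A B : alg) : Prop :=
  exists (h : car A -> car B) (g : car B -> car A),
    is_hom h /\ (forall x, g (h x) = x) /\ (forall y, h (g y) = y).

Record subuniverse (A : alg) := SubU {
  su_pred : car A -> Prop;
  su_closed : forall f (s : nat -> car A),
      (forall i, su_pred (s i)) -> su_pred (op A f s) }.

Definition sub_alg (A : alg) (S : subuniverse A) : alg :=
  @Alg {x : car A | su_pred S x}
    (fun f s => exist _ (op A f (fun i => proj1_sig (s i)))
                        (@su_closed A S f _ (fun i => proj2_sig (s i)))).

Definition prod_alg (I : Type) (F : I -> alg) : alg :=
  @Alg (forall i, car (F i)) (fun f s => fun i => op (F i) f (fun n => s n i)).

Definition iso_closed (C : class) := forall A B, C A -> iso A B -> C B.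
Definition H_closed (C : class) :=
  forall A B (h : car A -> car B), C A -> is_hom h ->
    (forall y, exists x, h x = y) -> C B.
Definition S_closed (C : class) := forall A (S : subuniverse A), C A -> C (sub_alg S).
Definition P_closed (C : class) :=
  forall (I : Type) (F : I -> alg), (forall i, C (F i)) -> C (prod_alg F).

Definition variety (K : class) : class := fun A =>
  forall C : class, iso_closed C -> H_closed C -> S_closed C -> P_closed C ->
    (forall B, K B -> C B) -> C A.

(** Infinitary clone tau-algebras (signature: constants e_i, constants for
    each f in tau, and the omega-ary q(x, y_0, y_1, ...) written q x y). *)
Record calg := CAlg {
  ccar : Type;
  ce : nat -> ccar;
  cf : tau -> ccar;
  cq : ccar -> (nat -> ccar) -> ccar }.

Definition is_clone (C : calg) : Prop :=
  (forall i (x : nat -> ccar C), cq (ce C i) x = x i) /\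
  (forall x, cq x (ce C) = x) /\
  (forall x (y : nat -> ccar C) (z : nat -> ccar C),
      cq (cq x y) z = cq x (fun i => cq (y i) z)).

Definition cis_hom (C D : calg) (h : ccar C -> ccar D) : Prop :=
  (forall i, h (ce C i) = ce D i) /\ (forall f, h (cf C f) = cf D f) /\
  (forall x y, h (cq x y) = cq (h x) (fun i => h (y i))).

Definition ciso (C D : calg) : Prop :=
  exists (h : ccar C -> ccar D) (g : ccar D -> ccar C),
    cis_hom h /\ (forall x, g (h x) = x) /\ (forall y, h (g y) = y).

Definition fullclone (A : alg) : calg :=
  @CAlg ((nat -> car A) -> car A)
    (fun i s => s i)
    (fun f => op A f)
    (fun g0 g s => g0 (fun i => g i s)).

Record csubuniverse (A : alg) := CSubU {
  csu_pred : ((nat -> car A) -> car A) -> Prop;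
  csu_e : forall i, csu_pred (ce (fullclone A) i);
  csu_f : forall f, csu_pred (cf (fullclone A) f);
  csu_q : forall x y, csu_pred x -> (forall i, csu_pred (y i)) ->
            csu_pred (@cq (fullclone A) x y) }.

Definition csub_alg (A : alg) (S : csubuniverse A) : calg :=
  @CAlg {g | csu_pred S g}
    (fun i => exist _ _ (csu_e S i))
    (fun f => exist _ _ (csu_f S f))
    (fun x y => exist _ _ (@csu_q A S _ _ (proj2_sig x) (fun i => proj2_sig (y i)))).

Definition cclass := calg -> Prop.

Definition triangle (K : class) : cclass := fun C =>
  is_clone C /\ exists A, K A /\ exists S : csubuniverse A, ciso C (csub_alg S).

Definition nabla (H : cclass) : class := fun B =>
  exists A, iso B A /\ exists S : csubuniverse A, H (csub_alg S).

Definition diamond (K : class) : class := nabla (triangle K).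

(** Ordinals, represented as elements of well-ordered types. *)
Record WellOrder := WO {
  wo_car :> Type;
  wo_lt : wo_car -> wo_car -> Prop;
  wo_wf : well_founded wo_lt;
  wo_trans : forall x y z, wo_lt x y -> wo_lt y z -> wo_lt x z;
  wo_total : forall x y, wo_lt x y \/ x = y \/ wo_lt y x }.

(** K^{diamond^mu} by transfinite recursion: 0 |-> K,
    successor nu+1 |-> (K^{diamond^nu})^diamond, limit mu |-> union below. *)
Definition diamond_iter (K : class) (W : WellOrder) : W -> class :=
  Fix (@wo_wf W) (fun _ => class)
    (fun x rec A =>
       ((forall y, ~ @wo_lt W y x) /\ K A) \/
       (exists y (h : @wo_lt W y x),
          (forall z, @wo_lt W z x -> z = y \/ @wo_lt W z y) /\
          diamond (fun B => rec y h B) A) \/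
       ((exists y, @wo_lt W y x) /\
        (forall y, @wo_lt W y x -> exists z, @wo_lt W y z /\ @wo_lt W z x) /\
        exists y (h : @wo_lt W y x), rec y h A)).

Definition diamond_union (K : class) : class := fun A =>
  exists (W : WellOrder) (mu : W), diamond_iter K mu A.

End Defs.

(** Every clone-subalgebra of [O_A] contains the term functions of [A], and a
    clone embedding [FCA(A) -> FCA(B)] sends the term function of [t] on [A]
    to that on [B]; being injective, it transfers every identity of [B] (in
    countably many variables) to [A].  These identities already put [A] into
    [V(B)]: [A] is a homomorphic image of the subalgebra of [B^(A -> B)]
    formed by the functions [a |-> t^B (a o s)].  Hence each diamond step
    stays inside the variety of a single member of [K], and transfinite
    induction along the well order does the rest. *)
From Stdlib Require Import Cantor ClassicalEpsilon FunctionalExtensionality ProofIrrelevance.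

Section Terms.
Variable tau : Type.

Inductive term := tvar (i : nat) | tapp (f : tau) (ts : nat -> term).

Fixpoint eval (A : alg tau) (t : term) (s : nat -> car A) : car A :=
  match t with
  | tvar i => s i
  | tapp f ts => @op tau A f (fun n => eval A (ts n) s)
  end.

Fixpoint rename (r : nat -> nat) (t : term) : term :=
  match t with
  | tvar i => tvar (r i)
  | tapp f ts => tapp f (fun n => rename r (ts n))
  end.

Lemma eval_rename (A : alg tau) r t s :
  eval A (rename r t) s = eval A t (fun i => s (r i)).
Proof.
  induction t as [i | f ts IH]; simpl; [reflexivity|].
  f_equal. apply functional_extensionality; intro n. apply IH.
Qed.

Definition satisfies (A : alg tau) (t1 t2 : term) : Prop :=
  forall s, eval A t1 s = eval A t2 s.

Definition join_seq {X : Type} (s : nat -> nat -> X) (k : nat) : X :=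
  s (fst (of_nat k)) (snd (of_nat k)).

Lemma join_seq_pair {X : Type} (s : nat -> nat -> X) n m :
  join_seq s (to_nat (n, m)) = s n m.
Proof. unfold join_seq. now rewrite cancel_of_to. Qed.

Definition combine (f : tau) (ts : nat -> term) : term :=
  tapp f (fun n => rename (fun m => to_nat (n, m)) (ts n)).

Lemma eval_combine (A : alg tau) f ts (s : nat -> nat -> car A) :
  eval A (combine f ts) (join_seq s) = @op tau A f (fun n => eval A (ts n) (s n)).
Proof.
  simpl. f_equal. apply functional_extensionality; intro n.
  rewrite eval_rename. f_equal. apply functional_extensionality; intro m.
  apply join_seq_pair.
Qed.

Definition canon {X : Type} (s : nat -> X) (k : nat) : nat :=
  epsilon (inhabits 0) (fun j => s j = s k).

Lemma canon_spec {X : Type} (s : nat -> X) k : s (canon s k) = s k.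
Proof. apply (epsilon_spec (inhabits 0) (fun j => s j = s k)). now exists k. Qed.

Lemma canon_factor {X Y : Type} (s : nat -> X) (b : nat -> Y) :
  exists a : X -> Y, forall k, b (canon s k) = a (s k).
Proof. exists (fun x => b (epsilon (inhabits 0) (fun j => s j = x))). reflexivity. Qed.

Lemma term_fun_in_csubuniverse (C : alg tau) (S : csubuniverse C) t :
  csu_pred S (eval C t).
Proof.
  induction t as [i | f ts IH]; [exact (csu_e S i)|].
  exact (csu_q (csu_f S f) IH).
Qed.

End Terms.

Arguments tvar {tau}.
Arguments eval {tau}.
Arguments rename {tau}.
Arguments satisfies {tau}.
Arguments combine {tau}.
Arguments eval_combine {tau}.
Arguments term_fun_in_csubuniverse {tau C}.

Section CloneEmbedding.
Variables (tau : Type) (A B : alg tau) (SA : csubuniverse A) (SB : csubuniverse B).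
Variables (h : ccar (csub_alg SA) -> ccar (csub_alg SB)) (g : ccar (csub_alg SB) -> ccar (csub_alg SA)).
Hypotheses (h_hom : cis_hom h) (hK : forall x, g (h x) = x).

Lemma cis_hom_eval (t : term tau) p : proj1_sig (h (exist _ (eval A t) p)) = eval B t.
Proof.
  destruct h_hom as [he [hf hq]].
  induction t as [i | f ts IH] in p |- *.
  - rewrite (proof_irrelevance _ p (csu_e SA i)). exact (f_equal (@proj1_sig _ _) (he i)).
  - pose proof (fun n => term_fun_in_csubuniverse SA (ts n)) as pts.
    rewrite (proof_irrelevance _ p (csu_q (csu_f SA f) pts)).
    change (exist _ _ (csu_q (csu_f SA f) pts)) with
      (@cq _ (csub_alg SA) (cf (csub_alg SA) f) (fun n => exist _ _ (pts n))).
    rewrite hq, hf. simpl. apply functional_extensionality; intro s. simpl.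
    f_equal. apply functional_extensionality; intro n. exact (f_equal (fun u => u s) (IH n (pts n))).
Qed.

Lemma clone_embedding_satisfies (t1 t2 : term tau) : satisfies B t1 t2 -> satisfies A t1 t2.
Proof.
  intros HB s.
  pose proof (term_fun_in_csubuniverse SA t1) as p1.
  pose proof (term_fun_in_csubuniverse SA t2) as p2.
  assert (E : h (exist _ _ p1) = h (exist _ _ p2)).
  { apply eq_sig_hprop; [intros; apply proof_irrelevance|].
    rewrite !cis_hom_eval. apply functional_extensionality, HB. }
  apply (f_equal g) in E. rewrite !hK in E.
  exact (f_equal (fun u => proj1_sig u s) E).
Qed.

End CloneEmbedding.

Arguments clone_embedding_satisfies {tau A B SA SB h g}.

Section Birkhoff.
Variables (tau : Type) (A B : alg tau).
Hypothesis identities : forall t1 t2 : term tau, satisfies B t1 t2 -> satisfies A t1 t2.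

Lemma eval_agree (t1 : term tau) s1 (t2 : term tau) s2 :
  (forall a : car A -> car B, eval B t1 (fun n => a (s1 n)) = eval B t2 (fun n => a (s2 n))) ->
  eval A t1 s1 = eval A t2 s2.
Proof.
  intros Hagree.
  (* Merge [s1] and [s2] into one sequence [s] and rename every variable to a
     canonical index of its value: an arbitrary assignment [b] of [B], read
     through [canon s], factors through [s], so the renamed equation is an
     identity of [B]. *)
  set (s := join_seq (fun n => match n with 0 => s1 | _ => s2 end)).
  set (r := fun n m => canon s (to_nat (n, m))).
  assert (s_r : forall n m, s (r n m) = s (to_nat (n, m))) by (intros; apply canon_spec).
  assert (Hsat : satisfies B (rename (r 0) t1) (rename (r 1) t2)).
  { intro b. destruct (canon_factor s b) as [a Ha].
    rewrite !eval_rename. unfold r. rewrite !(functional_extensionality _ _ (fun m => Ha _)).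
    unfold s. rewrite !(functional_extensionality _ _ (fun m => f_equal a (join_seq_pair _ _ m))).
    apply Hagree. }
  pose proof (identities _ _ Hsat s) as E. rewrite !eval_rename in E.
  rewrite !(functional_extensionality _ _ (s_r _)) in E.
  unfold s in E. rewrite !(functional_extensionality _ _ (join_seq_pair _ _)) in E.
  exact E.
Qed.

Definition power := prod_alg (fun _ : car A -> car B => B).

Definition represents (x : car power) (w : term tau * (nat -> car A)) : Prop :=
  x = fun a => eval B (fst w) (fun n => a (snd w n)).

Lemma represents_op f (xs : nat -> car power) w :
  (forall n, represents (xs n) (w n)) ->
  represents (@op tau power f xs) (combine f (fun n => fst (w n)), join_seq (fun n => snd (w n))).
Proof.
  intro Hw. apply functional_extensionality_dep; intro a.
  refine (eq_trans _ (eq_sym (eval_combine B f _ (fun n m => a (snd (w n) m))))).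
  simpl. f_equal. apply functional_extensionality; intro n. now rewrite (Hw n).
Qed.

Lemma represented_closed f (xs : nat -> car power) :
  (forall i, exists w, represents (xs i) w) -> exists w, represents (@op tau power f xs) w.
Proof.
  intro Hxs. destruct (choice _ Hxs) as [w Hw]. eexists. exact (represents_op f xs w Hw).
Qed.

Definition represented : subuniverse power :=
  @SubU tau power (fun x => exists w, represents x w) represented_closed.

Definition witness (x : car (sub_alg represented)) : term tau * (nat -> car A) :=
  proj1_sig (constructive_indefinite_description _ (proj2_sig x)).

Lemma witness_spec x : represents (proj1_sig x) (witness x).
Proof. exact (proj2_sig (constructive_indefinite_description _ (proj2_sig x))). Qed.

Definition read_off (x : car (sub_alg represented)) : car A :=
  eval A (fst (witness x)) (snd (witness x)).

Lemma read_off_represents x (t : term tau) s : represents (proj1_sig x) (t, s) -> read_off x = eval A t s.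
Proof.
  intro Hx. apply eval_agree. intro a.
  pose proof (witness_spec x) as Hw. unfold represents in *.
  rewrite Hx in Hw. exact (f_equal (fun z => z a) (eq_sym Hw)).
Qed.

Lemma read_off_hom : is_hom read_off.
Proof.
  intros f xs.
  rewrite (read_off_represents (op f xs) _ _ (represents_op f _ _ (fun n => witness_spec (xs n)))).
  apply eval_combine.
Qed.

Lemma read_off_surj y : exists x, read_off x = y.
Proof.
  assert (p : exists w, represents (fun a => a y) w) by now exists (tvar 0, fun _ => y).
  exists (exist (fun x => exists w, represents x w) _ p).
  now apply (read_off_represents _ (tvar 0) (fun _ => y)).
Qed.

Lemma variety_of_identities : variety (fun X => X = B) A.
Proof.
  intros C _ HH HS HP HB.
  apply (HH _ _ read_off (HS _ represented (HP _ _ (fun _ => HB B eq_refl))));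
    [exact read_off_hom | exact read_off_surj].
Qed.

End Birkhoff.

Section Varieties.
Context {tau : Type}.

Lemma iso_sym (A B : alg tau) : iso A B -> iso B A.
Proof.
  intros [h [g [Hh [Hgh Hhg]]]]. exists g, h. split; [|split; assumption].
  intros f s. rewrite <- (Hgh (op f (fun i => g (s i)))), Hh.
  f_equal. f_equal. apply functional_extensionality; intro i. now rewrite Hhg.
Qed.

Lemma variety_refl (A : alg tau) : variety (fun X => X = A) A.
Proof. intros C _ _ _ _ HA. now apply HA. Qed.

Lemma variety_trans {A B D : alg tau} :
  variety (fun X => X = B) A -> variety (fun X => X = D) B -> variety (fun X => X = D) A.
Proof. intros HA HB C HI HH HS HP HD. apply HA; auto. intros X ->. now apply HB. Qed.

Lemma variety_iso {A B D : alg tau} :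
  iso A B -> variety (fun X => X = D) B -> variety (fun X => X = D) A.
Proof.
  intros Hi HB C HI HH HS HP HD. apply (HI B); [now apply HB | now apply iso_sym].
Qed.

Lemma variety_mono {K : class tau} {A B : alg tau} :
  K B -> variety (fun X => X = B) A -> variety K A.
Proof. intros HB HA C HI HH HS HP HK. apply HA; auto. intros X ->. now apply HK. Qed.

Lemma diamond_in_variety {K : class tau} {A : alg tau} :
  diamond K A -> exists B, K B /\ variety (fun X => X = B) A.
Proof.
  intros [A' [Hi [S [_ [B [HB [SB [h [g [Hh [Hgh _]]]]]]]]]]].
  exists B. split; [exact HB|].
  apply (variety_iso Hi), variety_of_identities.
  exact (clone_embedding_satisfies Hh Hgh).
Qed.

End Varieties.

Lemma diamond_iter_eq (tau : Type) (K : class tau) (W : WellOrder) (x : W) (A : alg tau) :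
  diamond_iter K x A <->
       ((forall y, ~ @wo_lt W y x) /\ K A) \/
       (exists y (h : @wo_lt W y x),
          (forall z, @wo_lt W z x -> z = y \/ @wo_lt W z y) /\
          diamond (fun B => diamond_iter K y B) A) \/
       ((exists y, @wo_lt W y x) /\
        (forall y, @wo_lt W y x -> exists z, @wo_lt W y z /\ @wo_lt W z x) /\
        exists y (h : @wo_lt W y x), diamond_iter K y A).
Proof.
  unfold diamond_iter at 1. rewrite Fix_eq; [reflexivity|].
  intros x0 f1 f2 Hf.
  replace f2 with f1; [reflexivity|].
  apply functional_extensionality_dep; intro y.
  apply functional_extensionality_dep; intro p. apply Hf.
Qed.

Lemma diamond_iter_in_variety {tau : Type} {K : class tau} {W : WellOrder} (mu : W) (A : alg tau) :
  diamond_iter K mu A -> exists B, K B /\ variety (fun X => X = B) A.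
Proof.
  revert A. induction mu as [x IH] using (well_founded_ind (@wo_wf W)).
  intros A Hx. apply diamond_iter_eq in Hx.
  destruct Hx as [[_ HK] | [[y [hy [_ Hd]]] | [_ [_ [y [hy Hy]]]]]].
  - exists A. split; [exact HK | apply variety_refl].
  - destruct (diamond_in_variety Hd) as [A' [HA' HV']].
    destruct (IH y hy A' HA') as [B [HB HV]].
    exists B. split; [exact HB | exact (variety_trans HV' HV)].
  - exact (IH y hy A Hy).
Qed.

Definition zero_order : WellOrder.
Proof.
  refine (@WO unit (fun _ _ => False) _ _ _).
  - intro x. constructor. intros y [].
  - intros _ _ _ [].
  - intros [] []. right; left; reflexivity.
Defined.

Theorem lemma6p10 (tau : Type) (K : class tau) :
  (forall A, K A -> diamond_union K A) /\
  (forall A, diamond_union K A ->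
     exists B, K B /\ variety (fun X => X = B) A) /\
  (forall A, (exists B, K B /\ variety (fun X => X = B) A) -> variety K A).
Proof.
  split; [|split].
  - intros A HA. exists zero_order, tt. apply diamond_iter_eq. left.
    split; [intros y [] | exact HA].
  - intros A [W [mu Hmu]]. exact (diamond_iter_in_variety mu A Hmu).
  - intros A [B [HB HV]]. exact (variety_mono HB HV).
Qed.
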